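(* Let $0<q<p\le1$ and $n\in\mathbb{N}$. For $x\in[0,1]$ and $i=0,1,2$ let $e_i(t)=t^i$. Then for all $x\in[0,1]$, $$\widetilde{M}_{n,k}^{(p,q)}(e_0;x)=1,$$ $$\frac{x}{q^2}\left(1-\frac{q+1}{[n]_{p,q}}\right)\le \widetilde{M}_{n,k}^{(p,q)}(e_1;x)\le \frac{x}{q}+\frac{p^n-q^nx}{q^2[n]_{p,q}},$$ $$\widetilde{M}_{n,k}^{(p,q)}(e_2;x)\le \frac{x^2}{q^2}+\frac{(p+q)^2}{q^5}\frac{(p^n-q^nx)}{[n]_{p,q}}x+\frac{p(p+q)}{q^6}\frac{(p^n-q^nx)(p^{n-1}-q^{n-1}x)}{[n]_{p,q}[n-1]_{p,q}}.$$
   Context: For $0<q<p\le1$: $[n]_{p,q}=\frac{p^n-q^n}{p-q}$; $[n]_{p,q}!=[1]_{p,q}\cdots[n]_{p,q}$, $[0]_{p,q}!=1$; $\begin{bmatrix}n\\k\end{bmatrix}_{p,q}=\frac{[n]_{p,q}!}{[k]_{p,q}![n-k]_{p,q}!}$; $(x+y)_{p,q}^n=\prod_{j=0}^{n-1}(p^jx+q^jy)$. The $(p,q)$-integral is $\int_0^a f(t)\,d_{p,q}t=(p-q)a\sum_{j=0}^\infty \frac{q^j}{p^{j+1}}f\!\left(\frac{q^j}{p^{j+1}}a\right)$. Define $m_{n,k}^{(p,q)}(x)=\frac{1}{p^{kn+n(n+1)/2}}\begin{bmatrix}n+k\\k\end{bmatrix}_{p,q}x^k(1-x)^{n+1}_{p,q}$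 and $b_{n,k}^{(p,q)}(qt)=\frac{1}{p^{k(n-1)+n(n-1)/2}}\begin{bmatrix}n+k+1\\k\end{bmatrix}_{p,q}(qt)^k(1-qt)^n_{p,q}$. The $(p,q)$-Meyer-König-Zeller Durrmeyer operator applied to $f$ defined on $[0,1]$ is $$\widetilde{M}_{n,k}^{(p,q)}(f;x)=\frac{[n+1]_{p,q}}{p^n}\sum_{k=0}^\infty m_{n,k}^{(p,q)}(x)\,(pq)^{-k}\int_0^1 b_{n,k}^{(p,q)}(qt)f(t)\,d_{p,q}t,\quad 0\le x<1,$$ and $\widetilde{M}_{n,k}^{(p,q)}(f;1)=f(1)$ (the subscript $k$ in the notation is just part of the name; $k$ is summed over). *)

From Stdlib Require Import Reals Lra.
From Coquelicot Require Import Coquelicot.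
Open Scope R_scope.

Definition pq_num (p q : R) (n : nat) : R := (p ^ n - q ^ n) / (p - q).

Fixpoint pq_fact (p q : R) (n : nat) : R :=
  match n with
  | O => 1
  | S m => pq_fact p q m * pq_num p q (S m)
  end.

(* (p,q)-binomial coefficient [n choose k]_{p,q} (used with k <= n) *)
Definition pq_binom (p q : R) (n k : nat) : R :=
  pq_fact p q n / (pq_fact p q k * pq_fact p q (n - k)).

Fixpoint pq_pow (p q x y : R) (n : nat) : R :=
  match n with
  | O => 1
  | S m => pq_pow p q x y m * (p ^ m * x + q ^ m * y)
  end.

Definition pq_integral (p q : R) (f : R -> R) (a : R) : R :=
  (p - q) * a *
  Series (fun j : nat => q ^ j / p ^ (S j) * f (q ^ j / p ^ (S j) * a)).

Definition m_nk (p q : R) (n k : nat) (x : R) : R :=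
  / p ^ (k * n + (n * (n + 1)) / 2) * pq_binom p q (n + k) k * x ^ k
  * pq_pow p q 1 (- x) (n + 1).

(* b_{n,k}^{(p,q)}(u), to be evaluated at u = q t; requires n >= 1 so that
   the exponent k(n-1) + n(n-1)/2 is the natural-number one. *)
Definition b_nk (p q : R) (n k : nat) (u : R) : R :=
  / p ^ (k * (n - 1) + (n * (n - 1)) / 2) * pq_binom p q (n + k + 1) k * u ^ k
  * pq_pow p q 1 (- u) n.

Definition MKZD (p q : R) (n : nat) (f : R -> R) (x : R) : R :=
  if Rlt_dec x 1 then
    pq_num p q (n + 1) / p ^ n *
    Series (fun k : nat =>
      m_nk p q n k x * / (p * q) ^ k *
      pq_integral p q (fun t => b_nk p q n k (q * t) * f t) 1)
  else f 1.

Definition e_ (i : nat) : R -> R := fun t => t ^ i.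

From Stdlib Require Import Reals Lra Lia.
From Coquelicot Require Import Coquelicot.
Open Scope R_scope.

(* Write q = r p with 0 < r < 1.  Every (p,q)-quantity of the operator is a power of p times its
   r-analogue ([n]_{p,q} = p^(n-1) [n]_r, ...), and on the nodes r^j / p of the (p,q)-integral the
   kernel is evaluated at r^(j+1).  Hence, for x < 1,
     M_n^{(p,q)}(e_i; x) = p^(-i) sum_k w_k rho_i(k),
   with the r-MKZ weights w_k = (x; r)_(n+1) [n+k choose k]_r x^k and, from an r-Beta integral,
   rho_i(k) = prod_(j=1..i) (1 - r^(k+j)) / (1 - r^(n+k+j+1)).
   The r-negative binomial theorem sum_k [n+k choose k]_r x^k = 1 / (x; r)_(n+1) gives
   sum_k w_k = 1, and its index shifts k -> k-1 and n -> n-1 evaluate sum_k w_k g(k) in closed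
   form for g(k) = (1 - r^k) / (1 - r^(n+k)), 1 / (1 - r^(n+k)) and their second-order analogues.
   Bounding rho_1 and rho_2 termwise by combinations of these g gives the moment bounds.  At x = 1
   the operator is f(1), and the bounds reduce to (1 - q) [n]_{p,q} <= 1 - q^n. *)

Lemma is_series_Rext (a b : nat -> R) (la lb : R) :
  (forall k, a k = b k) -> la = lb -> is_series a la -> is_series b lb.
Proof. intros Hab <-; exact (is_series_ext a b la Hab). Qed.

Lemma is_series_Rplus (a b : nat -> R) (la lb : R) :
  is_series a la -> is_series b lb -> is_series (fun k => a k + b k) (la + lb).
Proof. exact (is_series_plus a b la lb). Qed.

Lemma is_series_Rscal (c : R) (a : nat -> R) (l : R) :
  is_series a l -> is_series (fun k => c * a k) (c * l).
Proof. exact (is_series_scal c a l). Qed.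

Lemma is_series_le (a b : nat -> R) (la lb : R) :
  is_series a la -> is_series b lb -> (forall k, a k <= b k) -> la <= lb.
Proof.
  intros Ha Hb Hab.
  apply (is_lim_seq_le (sum_n a) (sum_n b) la lb); [|exact Ha|exact Hb].
  intro n; rewrite !sum_n_Reals; apply sum_Rle; auto.
Qed.

Lemma is_series_tail (a : nat -> R) (l : R) :
  is_series a l -> is_series (fun k => a (S k)) (l - a O).
Proof.
  intro H; apply is_series_incr_1.
  unfold plus; simpl; replace (l - a O + a O) with l by ring; exact H.
Qed.

Lemma is_series_of_tail (a : nat -> R) (l : R) :
  a O = 0 -> is_series (fun k => a (S k)) l -> is_series a l.
Proof.
  intros H0 H; apply is_series_decr_1; rewrite H0.
  unfold plus, opp; simpl; replace (l + - 0) with l by ring; exact H.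
Qed.

Lemma ex_series_le_nonneg (a b : nat -> R) :
  (forall k, 0 <= a k <= b k) -> ex_series b -> ex_series a.
Proof.
  intro Hab; apply (@ex_series_le R_AbsRing R_CompleteNormedModule a b).
  intro k; change (Rabs (a k) <= b k); rewrite Rabs_right; [apply Hab | apply Rle_ge, Hab].
Qed.

Lemma Rdiv_nonneg (a b : R) : 0 <= a -> 0 < b -> 0 <= a / b.
Proof. intros; apply Rmult_le_pos; [|apply Rlt_le, Rinv_0_lt_compat]; lra. Qed.

Lemma Rle_of_sub_div (a b c d : R) : b - a = c / d -> 0 <= c -> 0 < d -> a <= b.
Proof. intros E Hc Hd; pose proof (Rdiv_nonneg c d Hc Hd); lra. Qed.

Lemma Rdiv_le_contravar_r (a b c : R) : 0 <= a -> 0 < b -> b <= c -> a / c <= a / b.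
Proof. intros; unfold Rdiv; apply Rmult_le_compat_l; [|apply Rinv_le_contravar]; lra. Qed.

Lemma Rdiv_le_Rdiv (a b c d : R) : 0 < b -> 0 < d -> a * d <= c * b -> a / b <= c / d.
Proof.
  intros Hb Hd H; apply Rmult_le_reg_r with (b * d); [nra|].
  replace (a / b * (b * d)) with (a * d) by (field; lra).
  replace (c / d * (b * d)) with (c * b) by (field; lra); exact H.
Qed.

Lemma pow_unit_interval y a : 0 <= y <= 1 -> 0 <= y ^ a <= 1.
Proof. intro Hy; rewrite <- (pow1 a); split; [apply pow_le | apply pow_incr]; lra. Qed.

(** * The r-negative binomial series *)

Section QCalculus.

Variable r : R.
Hypothesis r_bounds : 0 < r < 1.

(* [qfact a = (r; r)_a = [a]_r! (1 - r)^a]: the Pochhammer normalisation, not [pq_fact 1 r]. *)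
Fixpoint qfact (a : nat) : R :=
  match a with O => 1 | S b => qfact b * (1 - r ^ S b) end.

Definition qbinom (m k : nat) : R := qfact (m + k) / (qfact m * qfact k).

Fixpoint qpoch (y : R) (m : nat) : R :=
  match m with O => 1 | S m' => qpoch y m' * (1 - r ^ m' * y) end.

Lemma pow_r_bounds a : 0 <= r ^ a <= 1.
Proof. apply pow_unit_interval; lra. Qed.

Lemma pow_r_S_bounds m : 0 <= r ^ S m <= r.
Proof. pose proof (pow_r_bounds m); simpl; split; nra. Qed.

Lemma one_sub_pow_r_pos a : (0 < a)%nat -> 0 < 1 - r ^ a.
Proof. intro Ha; destruct (pow_lt_1_compat r a ltac:(lra) Ha); lra. Qed.

Lemma pq_num_one a : pq_num 1 r a = (1 - r ^ a) / (1 - r).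
Proof. unfold pq_num; rewrite pow1; reflexivity. Qed.

Lemma pq_num_one_pos a : (0 < a)%nat -> 0 < pq_num 1 r a.
Proof.
  intro Ha; rewrite pq_num_one; apply Rdiv_lt_0_compat; [apply one_sub_pow_r_pos, Ha | lra].
Qed.

Lemma qfact_pos a : 0 < qfact a.
Proof.
  induction a as [|a IH]; cbn [qfact]; [lra|].
  apply Rmult_lt_0_compat; [exact IH | apply one_sub_pow_r_pos; lia].
Qed.

Lemma qfact_add_le m k : qfact (m + k) <= qfact k.
Proof.
  induction m as [|m IH]; [apply Rle_refl|].
  rewrite Nat.add_succ_l; cbn [qfact].
  pose proof (qfact_pos (m + k)); pose proof (pow_r_bounds (S (m + k))); nra.
Qed.

Lemma qbinom_bounds m k : 0 <= qbinom m k <= / qfact m.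
Proof.
  pose proof (qfact_pos m); pose proof (qfact_pos k); pose proof (qfact_pos (m + k)).
  pose proof (qfact_add_le m k); assert (0 < qfact m * qfact k) by (apply Rmult_lt_0_compat; lra).
  unfold qbinom; split; [apply Rdiv_nonneg; lra|].
  replace (/ qfact m) with (qfact k / (qfact m * qfact k)) by (field; lra).
  unfold Rdiv; apply Rmult_le_compat_r; [apply Rlt_le, Rinv_0_lt_compat|]; lra.
Qed.

Lemma qbinom_0_r m : qbinom m 0 = 1.
Proof. unfold qbinom; rewrite Nat.add_0_r; cbn [qfact]; pose proof (qfact_pos m); field; lra. Qed.

Lemma qbinom_pascal m k :
  qbinom (S m) (S k) = qbinom m (S k) + r ^ S m * qbinom (S m) k.
Proof.
  unfold qbinom; replace (S m + S k)%nat with (S (S (m + k))) by lia.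
  replace (m + S k)%nat with (S (m + k)) by lia; replace (S m + k)%nat with (S (m + k)) by lia.
  cbn [qfact]; replace (S (S (m + k))) with (S m + S k)%nat by lia; rewrite pow_add.
  pose proof (qfact_pos m); pose proof (qfact_pos k).
  pose proof (one_sub_pow_r_pos (S m) ltac:(lia)).
  pose proof (one_sub_pow_r_pos (S k) ltac:(lia)).
  field; repeat split; lra.
Qed.

Lemma qbinom_succ_r n k :
  qbinom n (S k) * (1 - r ^ S k) = qbinom n k * (1 - r ^ (n + S k)).
Proof.
  unfold qbinom; rewrite Nat.add_succ_r; cbn [qfact]; rewrite <- Nat.add_succ_r.
  pose proof (qfact_pos n); pose proof (qfact_pos k).
  pose proof (one_sub_pow_r_pos (S k) ltac:(lia)).
  field; repeat split; lra.
Qed.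

Lemma qbinom_succ_l m k :
  qbinom (S m) k * (1 - r ^ S m) = qbinom m k * (1 - r ^ (S m + k)).
Proof.
  unfold qbinom; rewrite Nat.add_succ_l; cbn [qfact]; rewrite <- Nat.add_succ_l.
  pose proof (qfact_pos m); pose proof (qfact_pos k).
  pose proof (one_sub_pow_r_pos (S m) ltac:(lia)).
  field; repeat split; lra.
Qed.

Lemma qpoch_S y m : qpoch y (S m) = qpoch y m * (1 - r ^ m * y).
Proof. reflexivity. Qed.

Lemma qpoch_pos y m : 0 <= y < 1 -> 0 < qpoch y m.
Proof.
  intro Hy; induction m as [|m IH]; cbn [qpoch]; [lra|].
  pose proof (pow_r_bounds m); apply Rmult_lt_0_compat; nra.
Qed.

Lemma qpoch_pow_r j m : qpoch (r ^ S j) m = qfact (m + j) / qfact j.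
Proof.
  pose proof (qfact_pos j).
  induction m as [|m IH]; cbn [qpoch]; [simpl; field; lra|].
  rewrite IH, <- pow_add, Nat.add_succ_r, <- Nat.add_succ_l; cbn [qfact Nat.add].
  field; lra.
Qed.

Lemma is_series_qbinom m x :
  0 <= x < 1 -> is_series (fun k => qbinom m k * x ^ k) (/ qpoch x (S m)).
Proof.
  intro Hx; induction m as [|m IH].
  - assert (Hgeom : is_series (fun k => x ^ k) (/ (1 - x)))
      by (apply is_series_geom; rewrite Rabs_right; lra).
    refine (is_series_Rext _ _ _ _ _ _ Hgeom).
    + intro k; unfold qbinom; simpl; pose proof (qfact_pos k); field; lra.
    + simpl; f_equal; ring.
  - pose proof (qpoch_pos x (S m) Hx) as Hpoch.
    assert (Hex : ex_series (fun k => qbinom (S m) k * x ^ k)).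
    { apply (ex_series_le_nonneg _ (fun k => / qfact (S m) * x ^ k)).
      - intro k; pose proof (qbinom_bounds (S m) k); pose proof (pow_le x k (proj1 Hx)).
        split; [apply Rmult_le_pos | apply Rmult_le_compat_r]; lra.
      - exists (/ qfact (S m) * / (1 - x)); apply is_series_Rscal, is_series_geom.
        rewrite Rabs_right; lra. }
    destruct Hex as [l Hl]; change R in l.
    (* Pascal's rule splits the tail of the series into the tail of the series for [m]
       and [r^(m+1) x] times the whole series. *)
    assert (Hrec : l - 1 = / qpoch x (S m) - 1 + r ^ S m * x * l).
    { pose proof (is_series_tail _ _ Hl) as Htail; pose proof (is_series_tail _ _ IH) as HtailIH.
      cbn [pow] in Htail, HtailIH; rewrite !qbinom_0_r, !Rmult_1_r in Htail, HtailIH.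
      assert (Hpascal : is_series (fun k => qbinom (S m) (S k) * (x * x ^ k))
                          (/ qpoch x (S m) - 1 + r ^ S m * x * l)).
      { refine (is_series_Rext _ _ _ _ _ eq_refl
          (is_series_Rplus _ _ _ _ HtailIH (is_series_Rscal (r ^ S m * x) _ _ Hl))).
        intro k; simpl; rewrite qbinom_pascal; simpl; ring. }
      apply is_series_unique in Htail, Hpascal; congruence. }
    replace (/ qpoch x (S (S m))) with l; [exact Hl|].
    pose proof (pow_r_bounds (S m)); assert (0 < 1 - r ^ S m * x) by nra.
    assert (Hl' : l * (1 - r ^ S m * x) = / qpoch x (S m)) by lra.
    rewrite (qpoch_S x (S m)), Rinv_mult, <- Hl'; field; lra.
Qed.

Lemma is_series_qbinom_mul1 m x :
  0 <= x < 1 -> is_series (fun k => qbinom m k * x ^ k * 1) (/ qpoch x (S m)).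
Proof.
  intro Hx; refine (is_series_Rext _ _ _ _ _ eq_refl (is_series_qbinom m x Hx)); intro k; ring.
Qed.

(* At [k = 0] the factor [1 - r ^ 0] vanishes, so the truncation in [k - 1] is harmless. *)
Lemma is_series_qbinom_shift n x (g : nat -> R) l :
  is_series (fun k => qbinom n k * x ^ k * g k) l ->
  is_series (fun k => qbinom n k * x ^ k * ((1 - r ^ k) / (1 - r ^ (n + k)) * g (k - 1)%nat))
    (x * l).
Proof.
  intro Hg; apply is_series_of_tail; [cbn [pow]; unfold Rdiv; ring|].
  refine (is_series_Rext _ _ _ _ _ eq_refl (is_series_Rscal x _ _ Hg)).
  intro k; simpl (S k - 1)%nat; rewrite Nat.sub_0_r.
  pose proof (one_sub_pow_r_pos (n + S k) ltac:(lia)).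
  transitivity (qbinom n (S k) * (1 - r ^ S k) * x ^ S k * g k / (1 - r ^ (n + S k)));
    [|simpl; field; lra].
  rewrite qbinom_succ_r; simpl; field; lra.
Qed.

Lemma is_series_qbinom_down m x (g : nat -> R) l :
  is_series (fun k => qbinom m k * x ^ k * g k) l ->
  is_series (fun k => qbinom (S m) k * x ^ k * (g k / (1 - r ^ (S m + k))))
    (l / (1 - r ^ S m)).
Proof.
  intro Hg; refine (is_series_Rext _ _ _ _ _ eq_refl (is_series_scal_r (/ (1 - r ^ S m)) _ _ Hg)).
  intro k; pose proof (one_sub_pow_r_pos (S m) ltac:(lia)).
  pose proof (one_sub_pow_r_pos (S m + k) ltac:(lia)).
  transitivity
    (qbinom m k * (1 - r ^ (S m + k)) * x ^ k * g k / (1 - r ^ S m) / (1 - r ^ (S m + k)));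
    [field; lra|].
  rewrite <- qbinom_succ_l; field; lra.
Qed.

(** * Moments as mixtures of the MKZ weights *)

Definition mkz_weight (n : nat) (x : R) (k : nat) : R := qpoch x (S n) * qbinom n k * x ^ k.

(* The [k]-th term of the operator at [e_ i] is [mkz_weight n x k] times this factor, which is
   [n+1]_r r^(-k) times the r-Beta integral of the [k]-th kernel against t^i. *)
Definition mkz_ratio (n i k : nat) : R :=
  qfact (S n + k) * qfact (k + i) / (qfact k * qfact (S n + k + i)).

Definition mkz_moment (n i : nat) (x : R) : R :=
  Series (fun k => mkz_weight n x k * mkz_ratio n i k).

Lemma mkz_weight_nonneg n x k : 0 <= x < 1 -> 0 <= mkz_weight n x k.
Proof.
  intro Hx; pose proof (qpoch_pos x (S n) Hx); pose proof (qbinom_bounds n k).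
  pose proof (pow_le x k (proj1 Hx)).
  unfold mkz_weight; apply Rmult_le_pos; [apply Rmult_le_pos|]; lra.
Qed.

Lemma is_series_mkz_weight n x (g : nat -> R) l :
  is_series (fun k => qbinom n k * x ^ k * g k) l ->
  is_series (fun k => mkz_weight n x k * g k) (qpoch x (S n) * l).
Proof.
  intro Hg; refine (is_series_Rext _ _ _ _ _ eq_refl (is_series_Rscal (qpoch x (S n)) _ _ Hg)).
  intro k; unfold mkz_weight; ring.
Qed.

Lemma mkz_ratio_0 n k : mkz_ratio n 0 k = 1.
Proof.
  unfold mkz_ratio; rewrite !Nat.add_0_r.
  pose proof (qfact_pos k); pose proof (qfact_pos (S n + k)); field; lra.
Qed.

Lemma mkz_ratio_succ n i k :
  mkz_ratio n (S i) k = mkz_ratio n i k * ((1 - r ^ S (k + i)) / (1 - r ^ S (S n + k + i))).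
Proof.
  unfold mkz_ratio; rewrite !Nat.add_succ_r; cbn [qfact].
  pose proof (qfact_pos k); pose proof (qfact_pos (S n + k + i)).
  pose proof (one_sub_pow_r_pos (S (S n + k + i)) ltac:(lia)).
  field; repeat split; lra.
Qed.

Lemma mkz_ratio_bounds n i k : 0 <= mkz_ratio n i k <= 1.
Proof.
  induction i as [|i IH]; [rewrite mkz_ratio_0; lra|].
  rewrite mkz_ratio_succ.
  assert (Hpow : r ^ S (S n + k + i) <= r ^ S (k + i)).
  { replace (S (S n + k + i)) with (S (k + i) + S n)%nat by lia; rewrite pow_add.
    pose proof (pow_r_bounds (S (k + i))); pose proof (pow_r_bounds (S n)); nra. }
  pose proof (one_sub_pow_r_pos (S (k + i)) ltac:(lia)).
  pose proof (one_sub_pow_r_pos (S (S n + k + i)) ltac:(lia)).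
  assert (0 <= (1 - r ^ S (k + i)) / (1 - r ^ S (S n + k + i)) <= 1).
  { split; [apply Rlt_le, Rdiv_lt_0_compat; lra|].
    apply Rmult_le_reg_r with (1 - r ^ S (S n + k + i)); [lra|].
    unfold Rdiv; rewrite Rmult_assoc, Rinv_l; lra. }
  destruct IH; split; [apply Rmult_le_pos |]; nra.
Qed.

Lemma is_series_mkz_weight_1 n x : 0 <= x < 1 -> is_series (mkz_weight n x) 1.
Proof.
  intro Hx; pose proof (qpoch_pos x (S n) Hx).
  refine (is_series_Rext _ _ _ _ _ _ (is_series_mkz_weight n x _ _ (is_series_qbinom_mul1 n x Hx)));
    [intro k; ring | field; lra].
Qed.

Lemma is_series_mkz_moment n i x :
  0 <= x < 1 -> is_series (fun k => mkz_weight n x k * mkz_ratio n i k) (mkz_moment n i x).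
Proof.
  intro Hx; apply Series_correct.
  apply (ex_series_le_nonneg _ (mkz_weight n x)); [|exists 1; apply is_series_mkz_weight_1, Hx].
  intro k; pose proof (mkz_weight_nonneg n x k Hx); pose proof (mkz_ratio_bounds n i k).
  split; [apply Rmult_le_pos|]; nra.
Qed.

Lemma mkz_moment_0 n x : 0 <= x < 1 -> mkz_moment n 0 x = 1.
Proof.
  intro Hx; unfold mkz_moment; rewrite <- (is_series_unique _ _ (is_series_mkz_weight_1 n x Hx)).
  apply Series_ext; intro k; rewrite mkz_ratio_0; ring.
Qed.

Lemma is_series_mkz_shift n x :
  0 <= x < 1 -> is_series (fun k => mkz_weight n x k * ((1 - r ^ k) / (1 - r ^ (n + k)))) x.
Proof.
  intro Hx; pose proof (qpoch_pos x (S n) Hx).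
  refine (is_series_Rext _ _ _ _ _ _ (is_series_mkz_weight _ _ _ _
    (is_series_qbinom_shift n x _ _ (is_series_qbinom_mul1 n x Hx))));
    [intro k; ring | field; lra].
Qed.

Lemma is_series_mkz_down m x :
  0 <= x < 1 ->
  is_series (fun k => mkz_weight (S m) x k / (1 - r ^ (S m + k)))
    ((1 - r ^ S m * x) / (1 - r ^ S m)).
Proof.
  intro Hx; pose proof (qpoch_pos x (S m) Hx); pose proof (one_sub_pow_r_pos (S m) ltac:(lia)).
  refine (is_series_Rext _ _ _ _ _ _ (is_series_mkz_weight _ _ _ _
    (is_series_qbinom_down m x _ _ (is_series_qbinom_mul1 m x Hx)))).
  - intro k; unfold Rdiv; ring.
  - rewrite (qpoch_S x (S m)); field; lra.
Qed.

Definition mkz_den2 (l k : nat) : R := (1 - r ^ (S (S l) + k)) * (1 - r ^ (S l + k)).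

Lemma is_series_mkz_down2 l x :
  0 <= x < 1 ->
  is_series (fun k => mkz_weight (S (S l)) x k / mkz_den2 l k)
    ((1 - r ^ S (S l) * x) * (1 - r ^ S l * x) / ((1 - r ^ S (S l)) * (1 - r ^ S l))).
Proof.
  intro Hx; pose proof (qpoch_pos x (S l) Hx).
  pose proof (one_sub_pow_r_pos (S l) ltac:(lia)).
  pose proof (one_sub_pow_r_pos (S (S l)) ltac:(lia)).
  refine (is_series_Rext _ _ _ _ _ _ (is_series_mkz_weight _ _ _ _
    (is_series_qbinom_down (S l) x _ _
      (is_series_qbinom_down l x _ _ (is_series_qbinom_mul1 l x Hx))))).
  - intro k; unfold mkz_den2.
    pose proof (one_sub_pow_r_pos (S l + k) ltac:(lia)).
    pose proof (one_sub_pow_r_pos (S (S l) + k) ltac:(lia)).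
    field; lra.
  - rewrite (qpoch_S x (S (S l))), (qpoch_S x (S l)); field; lra.
Qed.

Lemma is_series_mkz_shift_down l x :
  0 <= x < 1 ->
  is_series (fun k => mkz_weight (S (S l)) x k * (1 - r ^ k) / mkz_den2 l k)
    (x * (1 - r ^ S (S l) * x) / (1 - r ^ S (S l))).
Proof.
  intro Hx; pose proof (qpoch_pos x (S (S l)) Hx).
  pose proof (one_sub_pow_r_pos (S (S l)) ltac:(lia)).
  refine (is_series_Rext _ _ _ _ _ _ (is_series_mkz_weight _ _ _ _ (is_series_qbinom_shift _ x _ _
    (is_series_qbinom_down (S l) x _ _ (is_series_qbinom_mul1 (S l) x Hx))))).
  - intros [|k]; [simpl; unfold Rdiv; ring|].
    replace (S (S l) + (S k - 1))%nat with (S l + S k)%nat by lia.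
    unfold mkz_den2.
    pose proof (one_sub_pow_r_pos (S l + S k) ltac:(lia)).
    pose proof (one_sub_pow_r_pos (S (S l) + S k) ltac:(lia)).
    field; lra.
  - rewrite (qpoch_S x (S (S l))); field; lra.
Qed.

Lemma is_series_mkz_shift2 l x :
  0 <= x < 1 ->
  is_series (fun k => mkz_weight (S (S l)) x k * ((1 - r ^ k) * (1 - r ^ (k - 1))) / mkz_den2 l k)
    (x ^ 2).
Proof.
  intro Hx; pose proof (qpoch_pos x (S (S (S l))) Hx).
  refine (is_series_Rext _ _ _ _ _ _ (is_series_mkz_weight _ _ _ _ (is_series_qbinom_shift _ x _ _
    (is_series_qbinom_shift _ x _ _ (is_series_qbinom_mul1 (S (S l)) x Hx))))).
  - intros [|k]; [simpl; unfold Rdiv; ring|].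
    replace (S (S l) + (S k - 1))%nat with (S l + S k)%nat by lia.
    unfold mkz_den2.
    pose proof (one_sub_pow_r_pos (S l + S k) ltac:(lia)).
    pose proof (one_sub_pow_r_pos (S (S l) + S k) ltac:(lia)).
    field; lra.
  - field; lra.
Qed.

Lemma mkz_ratio_1 n k : mkz_ratio n 1 k = (1 - r * r ^ k) / (1 - r ^ 2 * (r ^ n * r ^ k)).
Proof.
  rewrite mkz_ratio_succ, mkz_ratio_0, Rmult_1_l, !Nat.add_0_r.
  replace (S (S n + k)) with (2 + (n + k))%nat by lia; rewrite !pow_add; reflexivity.
Qed.

Lemma mkz_ratio_2 l k :
  mkz_ratio (S (S l)) 2 k
  = (1 - r * r ^ k) * (1 - r ^ 2 * r ^ k)
    / ((1 - r ^ 3 * r ^ (S l + k)) * (1 - r ^ 4 * r ^ (S l + k))).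
Proof.
  rewrite !mkz_ratio_succ, mkz_ratio_0, Rmult_1_l, !Nat.add_0_r.
  replace (S (k + 1)) with (2 + k)%nat by lia.
  replace (S (S (S (S l)) + k)) with (3 + (S l + k))%nat by lia.
  replace (S (S (S (S l)) + k + 1)) with (4 + (S l + k))%nat by lia.
  pose proof (one_sub_pow_r_pos (3 + (S l + k)) ltac:(lia)).
  pose proof (one_sub_pow_r_pos (4 + (S l + k)) ltac:(lia)).
  rewrite (pow_add r 2 k), (pow_add r 3), (pow_add r 4) in *; simpl (r ^ S k).
  field; lra.
Qed.

Lemma ratio1_upper a b :
  0 <= a <= 1 -> 0 <= b <= r ->
  (1 - r * a) / (1 - r ^ 2 * (b * a)) <= (1 - r * a) / (r ^ 2 * (1 - b * a)).
Proof.
  intros Ha Hb; assert (0 <= b * a <= r) by nra; assert (0 < r ^ 2 <= 1) by nra.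
  apply Rdiv_le_contravar_r; nra.
Qed.

Lemma ratio1_lower a b :
  0 <= a <= 1 -> 0 <= b <= r ->
  (r ^ 2 - b) / (r ^ 2 * (1 - b)) * ((1 - a) / (1 - b * a)) <= (1 - r * a) / (1 - r ^ 2 * (b * a)).
Proof.
  intros Ha Hb; assert (0 <= b * a <= r) by nra; assert (0 < r ^ 2 <= 1) by nra.
  replace ((r ^ 2 - b) / (r ^ 2 * (1 - b)) * ((1 - a) / (1 - b * a)))
    with ((r ^ 2 - b) * (1 - a) / (r ^ 2 * (1 - b) * (1 - b * a))) by (field; repeat split; nra).
  apply Rdiv_le_Rdiv; [apply Rmult_lt_0_compat; [apply Rmult_lt_0_compat|] | |]; try nra.
  assert (0 <= a * r ^ 2 <= 1) by (split; nra).
  assert (0 <= a * r ^ 2 * (b + r) <= 1 + r) by (split; nra).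
  assert (E : (1 - r * a) * (r ^ 2 * (1 - b) * (1 - b * a))
              - (r ^ 2 - b) * (1 - a) * (1 - r ^ 2 * (b * a))
              = (1 - r) * (a * r ^ 2 * (1 - b) ^ 2 + b * (1 - a) * (1 + r - a * r ^ 2 * (b + r))))
    by ring.
  assert (0 <= (1 - r) * (a * r ^ 2 * (1 - b) ^ 2 + b * (1 - a) * (1 + r - a * r ^ 2 * (b + r)))).
  { apply Rmult_le_pos; [lra|]; apply Rplus_le_le_0_compat; apply Rmult_le_pos; nra. }
  lra.
Qed.

Lemma ratio2_upper a d :
  0 <= a <= 1 -> 0 <= d <= r ->
  (1 - r * a) * (1 - r ^ 2 * a) / ((1 - r ^ 3 * d) * (1 - r ^ 4 * d))
  <= (1 - r * a) * (1 - r ^ 2 * a) / (r ^ 6 * ((1 - r * d) * (1 - d))).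
Proof.
  intros Ha Hd.
  assert (0 < r ^ 2 <= 1) by (split; nra); assert (0 < r ^ 4 <= 1) by (split; nra).
  assert (r * a <= 1) by nra; assert (r ^ 2 * a <= 1) by nra; assert (r * d < 1) by nra.
  apply Rdiv_le_contravar_r.
  - apply Rmult_le_pos; lra.
  - apply Rmult_lt_0_compat; [apply pow_lt | apply Rmult_lt_0_compat]; lra.
  - replace (r ^ 6 * ((1 - r * d) * (1 - d)))
      with ((r ^ 2 * (1 - r * d)) * (r ^ 4 * (1 - d))) by ring.
    apply Rmult_le_compat; nra.
Qed.

(* The numerator of [mkz_ratio _ 2 k] in the basis whose weighted sums are known. *)
Lemma ratio2_numerator k :
  (1 - r * r ^ k) * (1 - r ^ 2 * r ^ k)
  = (1 + r) * (1 - r) ^ 2 + r * (1 + r) ^ 2 * (1 - r) * (1 - r ^ k)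
    + r ^ 4 * ((1 - r ^ k) * (1 - r ^ (k - 1))).
Proof.
  destruct k as [|k]; [simpl; ring | simpl (S k - 1)%nat; rewrite Nat.sub_0_r; simpl; ring].
Qed.

Lemma mkz_moment1_upper m x :
  0 <= x < 1 -> mkz_moment (S m) 1 x <= x / r + (1 - r ^ S m * x) / (r ^ 2 * pq_num 1 r (S m)).
Proof.
  intro Hx.
  assert (Hbound : is_series
    (fun k => (1 - r) / r ^ 2 * (mkz_weight (S m) x k / (1 - r ^ (S m + k)))
              + / r * (mkz_weight (S m) x k * ((1 - r ^ k) / (1 - r ^ (S m + k)))))
    ((1 - r) / r ^ 2 * ((1 - r ^ S m * x) / (1 - r ^ S m)) + / r * x))
    by (apply is_series_Rplus; apply is_series_Rscal;
        [apply is_series_mkz_down | apply is_series_mkz_shift]; exact Hx).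
  eapply Rle_trans; [apply (is_series_le _ _ _ _ (is_series_mkz_moment (S m) 1 x Hx) Hbound)|].
  - intro k; pose proof (one_sub_pow_r_pos (S m + k) ltac:(lia)).
    pose proof (mkz_weight_nonneg (S m) x k Hx).
    pose proof (pow_r_bounds k); pose proof (pow_r_S_bounds m).
    rewrite mkz_ratio_1; rewrite pow_add in *.
    eapply Rle_trans; [apply Rmult_le_compat_l, ratio1_upper; assumption|].
    right; field; lra.
  - right; pose proof (one_sub_pow_r_pos (S m) ltac:(lia)); rewrite pq_num_one; field; lra.
Qed.

Lemma mkz_moment1_lower m x :
  0 <= x < 1 -> x / r ^ 2 * (1 - (r + 1) / pq_num 1 r (S m)) <= mkz_moment (S m) 1 x.
Proof.
  intro Hx; set (c := (r ^ 2 - r ^ S m) / (r ^ 2 * (1 - r ^ S m))).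
  assert (Hbound : is_series
    (fun k => c * (mkz_weight (S m) x k * ((1 - r ^ k) / (1 - r ^ (S m + k))))) (c * x))
    by (apply is_series_Rscal, is_series_mkz_shift, Hx).
  eapply Rle_trans; [|apply (is_series_le _ _ _ _ Hbound (is_series_mkz_moment (S m) 1 x Hx))].
  - right; pose proof (one_sub_pow_r_pos (S m) ltac:(lia)); unfold c; rewrite pq_num_one.
    field; lra.
  - intro k; pose proof (one_sub_pow_r_pos (S m + k) ltac:(lia)).
    pose proof (mkz_weight_nonneg (S m) x k Hx).
    pose proof (pow_r_bounds k); pose proof (pow_r_S_bounds m).
    rewrite mkz_ratio_1; rewrite pow_add in *.
    rewrite Rmult_comm, Rmult_assoc, (Rmult_comm _ c); apply Rmult_le_compat_l; [lra|].
    unfold c; apply ratio1_lower; assumption.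
Qed.

Lemma mkz_moment2_upper l x :
  0 <= x < 1 ->
  mkz_moment (S (S l)) 2 x
  <= x ^ 2 / r ^ 2
     + (1 + r) ^ 2 / r ^ 5 * ((1 - r ^ S (S l) * x) / pq_num 1 r (S (S l))) * x
     + (1 + r) / r ^ 6 * ((1 - r ^ S (S l) * x) * (1 - r ^ S l * x)
                          / (pq_num 1 r (S (S l)) * pq_num 1 r (S l))).
Proof.
  intro Hx.
  set (C0 := (1 + r) * (1 - r) ^ 2 / r ^ 6); set (C1 := (1 + r) ^ 2 * (1 - r) / r ^ 5).
  assert (Hbound : is_series
    (fun k => C0 * (mkz_weight (S (S l)) x k / mkz_den2 l k)
              + C1 * (mkz_weight (S (S l)) x k * (1 - r ^ k) / mkz_den2 l k)
              + / r ^ 2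
                * (mkz_weight (S (S l)) x k * ((1 - r ^ k) * (1 - r ^ (k - 1))) / mkz_den2 l k))
    (C0 * ((1 - r ^ S (S l) * x) * (1 - r ^ S l * x) / ((1 - r ^ S (S l)) * (1 - r ^ S l)))
     + C1 * (x * (1 - r ^ S (S l) * x) / (1 - r ^ S (S l))) + / r ^ 2 * x ^ 2))
    by (apply is_series_Rplus; [apply is_series_Rplus|]; apply is_series_Rscal;
        [apply is_series_mkz_down2 | apply is_series_mkz_shift_down | apply is_series_mkz_shift2];
        exact Hx).
  eapply Rle_trans; [apply (is_series_le _ _ _ _ (is_series_mkz_moment _ 2 x Hx) Hbound)|].
  - intro k; pose proof (mkz_weight_nonneg (S (S l)) x k Hx).
    pose proof (pow_r_bounds k); pose proof (pow_r_S_bounds (l + k)).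
    pose proof (one_sub_pow_r_pos (S (S l) + k) ltac:(lia)).
    pose proof (one_sub_pow_r_pos (S l + k) ltac:(lia)).
    replace (r ^ (S (S l) + k)) with (r * r ^ (S l + k)) in * by reflexivity.
    rewrite mkz_ratio_2.
    eapply Rle_trans; [apply Rmult_le_compat_l, ratio2_upper; assumption|].
    right; rewrite ratio2_numerator; unfold mkz_den2, C0, C1.
    replace (r ^ (S (S l) + k)) with (r * r ^ (S l + k)) by reflexivity.
    field; lra.
  - right; pose proof (one_sub_pow_r_pos (S l) ltac:(lia)).
    pose proof (one_sub_pow_r_pos (S (S l)) ltac:(lia)).
    unfold C0, C1; rewrite !pq_num_one; field; lra.
Qed.

End QCalculus.

(** * Dilation: q = r p *)

Fixpoint triangle (n : nat) : nat := match n with O => O | S m => triangle m + m end.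

Lemma triangle_div2 n : (n * (n - 1) / 2 = triangle n)%nat.
Proof.
  assert (H : (2 * triangle n + n = n * n)%nat)
    by (induction n as [|n IH]; simpl triangle; nia).
  replace (n * (n - 1))%nat with (triangle n * 2)%nat
    by (destruct n; [reflexivity | rewrite Nat.sub_succ, Nat.sub_0_r; nia]).
  apply Nat.div_mul; lia.
Qed.

Lemma triangle_add m k : (triangle (m + k) = triangle m + triangle k + m * k)%nat.
Proof.
  induction k as [|k IH]; [rewrite Nat.add_0_r; simpl; lia|].
  rewrite Nat.add_succ_r; simpl triangle; rewrite IH; nia.
Qed.

Section Dilation.

Variables p r : R.
Hypothesis p_pos : 0 < p.
Hypothesis r_bounds : 0 < r < 1.

Lemma pq_num_dilate a : pq_num p (r * p) (S a) = p ^ a * pq_num 1 r (S a).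
Proof.
  assert (0 < p - r * p) by nra.
  unfold pq_num; rewrite pow1, Rpow_mult_distr; simpl; field; lra.
Qed.

Lemma pq_fact_dilate a : pq_fact p (r * p) a = p ^ triangle a * qfact r a / (1 - r) ^ a.
Proof.
  induction a as [|a IH]; [simpl; field|].
  cbn [pq_fact triangle qfact]; rewrite IH, pq_num_dilate, pq_num_one, pow_add.
  simpl; field; split; [apply pow_nonzero|]; lra.
Qed.

Lemma pq_binom_dilate m k : pq_binom p (r * p) (m + k) k = p ^ (k * m) * qbinom r m k.
Proof.
  unfold pq_binom, qbinom; replace (m + k - k)%nat with m by lia.
  rewrite !pq_fact_dilate, (Nat.add_comm m k), triangle_add, !pow_add, (Nat.add_comm k m).
  pose proof (qfact_pos r r_bounds m); pose proof (qfact_pos r r_bounds k).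
  field; repeat split; try lra; apply pow_nonzero; lra.
Qed.

Lemma pq_pow_dilate y a : pq_pow p (r * p) 1 (- y) a = p ^ triangle a * qpoch r y a.
Proof.
  induction a as [|a IH]; [simpl; ring|].
  cbn [pq_pow triangle qpoch]; rewrite IH, pow_add, Rpow_mult_distr; ring.
Qed.

Lemma m_nk_dilate n k x : m_nk p (r * p) n k x = mkz_weight r n x k.
Proof.
  unfold m_nk, mkz_weight.
  replace (n * (n + 1) / 2)%nat with (triangle (S n)) by (rewrite <- triangle_div2; f_equal; lia).
  rewrite Nat.add_1_r, pq_pow_dilate, pq_binom_dilate, pow_add.
  field; split; apply pow_nonzero; lra.
Qed.

Lemma b_nk_dilate n k u :
  (1 <= n)%nat -> b_nk p (r * p) n k u = p ^ (2 * k) * qbinom r (S n) k * u ^ k * qpoch r u n.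
Proof.
  intro Hn; unfold b_nk; rewrite triangle_div2.
  replace (n + k + 1)%nat with (S n + k)%nat by lia.
  rewrite pq_pow_dilate, pq_binom_dilate.
  replace (k * S n)%nat with (k * (n - 1) + 2 * k)%nat by nia; rewrite !pow_add.
  field; split; apply pow_nonzero; lra.
Qed.

Lemma pq_integral_b_nk_e n k i :
  (1 <= n)%nat ->
  pq_integral p (r * p) (fun t => b_nk p (r * p) n k (r * p * t) * e_ i t) 1
  = (1 - r) * p ^ (2 * k) / p ^ i * r ^ k * qbinom r (S n) k
    * qfact r n * qfact r (k + i) / qfact r (S n + (k + i)).
Proof.
  intro Hn; unfold pq_integral; rewrite Rmult_1_r.
  set (C := p ^ (2 * k) / p ^ S i * r ^ k * qbinom r (S n) k * qfact r n).
  assert (Hbeta : 0 <= r ^ S (k + i) < 1) by (pose proof (pow_r_S_bounds r r_bounds (k + i)); lra).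
  assert (Hseries : is_series
    (fun j => (r * p) ^ j / p ^ S j * (b_nk p (r * p) n k (r * p * ((r * p) ^ j / p ^ S j * 1))
                                       * e_ i ((r * p) ^ j / p ^ S j * 1)))
    (C * / qpoch r (r ^ S (k + i)) (S n))).
  { refine (is_series_Rext _ _ _ _ _ eq_refl
      (is_series_Rscal C _ _ (is_series_qbinom r r_bounds n _ Hbeta))).
    intro j; assert (Hnode : (r * p) ^ j / p ^ S j = r ^ j / p)
      by (rewrite Rpow_mult_distr; simpl; field; split; try lra; apply pow_nonzero; lra).
    rewrite Rmult_1_r, Hnode.
    replace (r * p * (r ^ j / p)) with (r ^ S j) by (simpl; field; lra).
    rewrite b_nk_dilate, qpoch_pow_r by assumption; unfold e_, C.
    assert (Epow : r ^ j * (r ^ S j) ^ k * (r ^ j) ^ i = r ^ k * (r ^ S (k + i)) ^ j)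
      by (rewrite <- !pow_mult, <- !pow_add; f_equal; nia).
    replace ((r ^ S (k + i)) ^ j) with (r ^ j * (r ^ S j) ^ k * (r ^ j) ^ i / r ^ k)
      by (rewrite Epow; field; apply pow_nonzero; lra).
    replace ((r ^ j / p) ^ i) with ((r ^ j) ^ i / p ^ i)
      by (unfold Rdiv; rewrite Rpow_mult_distr, pow_inv; reflexivity).
    unfold qbinom; pose proof (qfact_pos r r_bounds n); pose proof (qfact_pos r r_bounds j).
    pose proof (qfact_pos r r_bounds k); pose proof (qfact_pos r r_bounds (S n)).
    simpl (p ^ S i); field; repeat split; try lra; apply pow_nonzero; lra. }
  rewrite (is_series_unique _ _ Hseries), qpoch_pow_r by assumption; unfold C.
  pose proof (qfact_pos r r_bounds (k + i)); pose proof (qfact_pos r r_bounds (S n + (k + i))).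
  simpl (p ^ S i); field; repeat split; try lra; apply pow_nonzero; lra.
Qed.

Lemma MKZD_e_moment n i x :
  (1 <= n)%nat -> 0 <= x < 1 -> MKZD p (r * p) n (e_ i) x = mkz_moment r n i x / p ^ i.
Proof.
  intros Hn Hx; unfold MKZD, mkz_moment; destruct (Rlt_dec x 1) as [_|]; [|lra].
  pose proof (one_sub_pow_r_pos r r_bounds (S n) ltac:(lia)).
  rewrite (Series_ext _ (fun k => (1 - r) / ((1 - r ^ S n) * p ^ i)
                                  * (mkz_weight r n x k * mkz_ratio r n i k))).
  - rewrite Series_scal_l, Nat.add_1_r, pq_num_dilate, pq_num_one.
    field; repeat split; try lra; apply pow_nonzero; lra.
  - intro k; rewrite m_nk_dilate, pq_integral_b_nk_e by assumption.
    unfold mkz_ratio, qbinom; rewrite Nat.add_assoc.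
    change (qfact r (S n)) with (qfact r n * (1 - r ^ S n)).
    pose proof (qfact_pos r r_bounds n); pose proof (qfact_pos r r_bounds k).
    pose proof (qfact_pos r r_bounds (S n + k + i)).
    rewrite !Rpow_mult_distr; replace (2 * k)%nat with (k + k)%nat by lia; rewrite pow_add.
    field; repeat split; try lra; apply pow_nonzero; lra.
Qed.

End Dilation.

(** * The bounds for the (p,q)-operator *)

Lemma pq_num_succ p q n : p <> q -> pq_num p q (S n) = p * pq_num p q n + q ^ n.
Proof. intro Hpq; unfold pq_num; simpl; field; lra. Qed.

Lemma pq_num_comm p q n : p <> q -> pq_num p q n = pq_num q p n.
Proof. intro Hpq; unfold pq_num; field; lra. Qed.

Lemma pq_num_bound p q n :
  0 <= p <= 1 -> 0 <= q <= 1 -> p <> q ->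
  0 <= pq_num p q n /\ (1 - q) * pq_num p q n <= 1 - q ^ n.
Proof.
  intros Hp Hq Hpq; induction n as [|n [IHpos IHle]].
  - unfold pq_num; simpl; replace ((1 - 1) / (p - q)) with 0 by (field; lra); lra.
  - rewrite pq_num_succ by assumption; pose proof (pow_unit_interval q n Hq).
    simpl; split; nra.
Qed.

Lemma exists_ratio p q : 0 < q -> q < p -> exists r, 0 < r < 1 /\ q = r * p.
Proof.
  intros Hq Hqp; exists (q / p); split; [split|].
  - apply Rdiv_lt_0_compat; lra.
  - apply Rmult_lt_reg_r with p; [lra|]; unfold Rdiv; rewrite Rmult_assoc, Rinv_l; lra.
  - field; lra.
Qed.

Lemma MKZD_at_1 p q n f : MKZD p q n f 1 = f 1.
Proof. unfold MKZD; destruct (Rlt_dec 1 1); [lra | reflexivity]. Qed.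

Lemma e_at_1 i : e_ i 1 = 1.
Proof. apply pow1. Qed.

Lemma MKZD_e0 p q n x :
  0 < q -> q < p -> (1 <= n)%nat -> 0 <= x <= 1 -> MKZD p q n (e_ 0) x = 1.
Proof.
  intros Hq Hqp Hn Hx; destruct (exists_ratio p q Hq Hqp) as [r [Hr ->]].
  destruct (Rlt_or_le x 1) as [Hx1|Hx1].
  - rewrite MKZD_e_moment, mkz_moment_0 by (assumption || nra || lra); simpl; field.
  - replace x with 1 by lra; rewrite MKZD_at_1; apply e_at_1.
Qed.

Lemma MKZD_e1_upper p q n x :
  0 < q -> q < p -> p <= 1 -> (1 <= n)%nat -> 0 <= x <= 1 ->
  MKZD p q n (e_ 1) x <= x / q + (p ^ n - q ^ n * x) / (q ^ 2 * pq_num p q n).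
Proof.
  intros Hq Hqp Hp1 Hn Hx; destruct (exists_ratio p q Hq Hqp) as [r [Hr ->]].
  destruct n as [|m]; [lia|]; assert (Hp : 0 < p) by nra.
  pose proof (pq_num_one_pos r Hr (S m) ltac:(lia)).
  rewrite pq_num_dilate by assumption.
  destruct (Rlt_or_le x 1) as [Hx1|Hx1].
  - rewrite MKZD_e_moment by (assumption || lia || lra).
    eapply Rle_trans; [apply Rmult_le_compat_r;
      [apply Rlt_le, Rinv_0_lt_compat, pow_lt, Hp | apply mkz_moment1_upper; [exact Hr | lra]]|].
    right; rewrite !Rpow_mult_distr; cbn [pow].
    field; repeat split; try lra; apply pow_nonzero; lra.
  - replace x with 1 by lra; rewrite MKZD_at_1, e_at_1.
    assert (1 <= 1 / (r * p)) by (apply (Rle_of_sub_div _ _ (1 - r * p) (r * p)); [field|..]; nra).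
    assert (0 <= (p ^ S m - (r * p) ^ S m * 1) / ((r * p) ^ 2 * (p ^ m * pq_num 1 r (S m)))).
    { pose proof (pow_incr (r * p) p (S m) ltac:(nra)).
      apply Rdiv_nonneg; [lra|].
      apply Rmult_lt_0_compat; [|apply Rmult_lt_0_compat]; try apply pow_lt; nra. }
    lra.
Qed.

Lemma MKZD_e1_lower p q n x :
  0 < q -> q < p -> p <= 1 -> (1 <= n)%nat -> 0 <= x <= 1 ->
  x / q ^ 2 * (1 - (q + 1) / pq_num p q n) <= MKZD p q n (e_ 1) x.
Proof.
  intros Hq Hqp Hp1 Hn Hx.
  destruct (pq_num_bound p q n ltac:(lra) ltac:(lra) ltac:(lra)) as [_ Hq_bound].
  destruct (pq_num_bound q p n ltac:(lra) ltac:(lra) ltac:(lra)) as [_ Hp_bound].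
  rewrite <- pq_num_comm in Hp_bound by lra.
  destruct (exists_ratio p q Hq Hqp) as [r [Hr ->]].
  destruct n as [|m]; [lia|]; assert (Hp : 0 < p) by nra.
  pose proof (pq_num_one_pos r Hr (S m) ltac:(lia)); pose proof (pow_unit_interval p m ltac:(lra)).
  rewrite pq_num_dilate in * by assumption.
  destruct (Rlt_or_le x 1) as [Hx1|Hx1].
  - rewrite MKZD_e_moment by (assumption || lia || lra).
    eapply Rle_trans; [|apply Rmult_le_compat_r;
      [apply Rlt_le, Rinv_0_lt_compat, pow_lt, Hp | apply mkz_moment1_lower; [exact Hr | lra]]].
    (* The r-bound carries an extra factor p; [(1 - p) [n]_{p,q} <= 1 - p^n] absorbs it. *)
    apply (Rle_of_sub_div _ _
      (x * (r * p + 1 - p ^ S m * (r + 1) - (1 - p) * (p ^ m * pq_num 1 r (S m))))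
      (r ^ 2 * p ^ 2 * (p ^ m * pq_num 1 r (S m)))).
    + cbn [pow]; field; repeat split; try lra; apply pow_nonzero; lra.
    + apply Rmult_le_pos; [lra|]; cbn [pow] in *; nra.
    + apply Rmult_lt_0_compat; [apply Rmult_lt_0_compat; apply pow_lt |
                               apply Rmult_lt_0_compat; try apply pow_lt]; lra.
  - replace x with 1 by lra; rewrite MKZD_at_1, e_at_1.
    pose proof (pow_unit_interval (r * p) (S m) ltac:(split; nra)).
    apply (Rle_of_sub_div _ _ ((1 + r * p) * (1 - (1 - r * p) * (p ^ m * pq_num 1 r (S m))))
      ((r * p) ^ 2 * (p ^ m * pq_num 1 r (S m)))).
    + field; repeat split; try lra; apply pow_nonzero; lra.
    + apply Rmult_le_pos; lra.
    + apply Rmult_lt_0_compat; [|apply Rmult_lt_0_compat; try apply pow_lt]; try apply pow_lt; nra.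
Qed.

Lemma MKZD_e2_upper p q n x :
  0 < q -> q < p -> p <= 1 -> (2 <= n)%nat -> 0 <= x <= 1 ->
  MKZD p q n (e_ 2) x <=
    x ^ 2 / q ^ 2
    + (p + q) ^ 2 / q ^ 5 * ((p ^ n - q ^ n * x) / pq_num p q n) * x
    + p * (p + q) / q ^ 6 *
      ((p ^ n - q ^ n * x) * (p ^ (n - 1) - q ^ (n - 1) * x) / (pq_num p q n * pq_num p q (n - 1))).
Proof.
  intros Hq Hqp Hp1 Hn Hx; destruct (exists_ratio p q Hq Hqp) as [r [Hr ->]].
  destruct n as [|[|l]]; [lia | lia |]; simpl (S (S l) - 1)%nat; assert (Hp : 0 < p) by nra.
  pose proof (pq_num_one_pos r Hr (S l) ltac:(lia)).
  pose proof (pq_num_one_pos r Hr (S (S l)) ltac:(lia)).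
  rewrite !pq_num_dilate by assumption.
  destruct (Rlt_or_le x 1) as [Hx1|Hx1].
  - rewrite MKZD_e_moment by (assumption || lia || lra).
    eapply Rle_trans; [apply Rmult_le_compat_r;
      [apply Rlt_le, Rinv_0_lt_compat, pow_lt, Hp | apply mkz_moment2_upper; [exact Hr | lra]]|].
    right; rewrite !Rpow_mult_distr; cbn [pow].
    field; repeat split; try lra; apply pow_nonzero; lra.
  - replace x with 1 by lra; rewrite MKZD_at_1, e_at_1.
    pose proof (pow_incr (r * p) p (S l) ltac:(nra)).
    pose proof (pow_incr (r * p) p (S (S l)) ltac:(nra)).
    pose proof (pow_lt p l Hp); pose proof (pow_lt p (S l) Hp); pose proof (pow_lt (r * p) 5 Hq).
    pose proof (pow_lt (r * p) 6 Hq).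
    assert (1 <= 1 ^ 2 / (r * p) ^ 2)
      by (apply (Rle_of_sub_div _ _ (1 - (r * p) ^ 2) ((r * p) ^ 2));
          [field | | apply pow_lt]; nra).
    assert (0 <= (p + r * p) ^ 2 / (r * p) ^ 5
                 * ((p ^ S (S l) - (r * p) ^ S (S l) * 1) / (p ^ S l * pq_num 1 r (S (S l)))) * 1).
    { rewrite Rmult_1_r; apply Rmult_le_pos; apply Rdiv_nonneg; try nra. }
    assert (0 <= p * (p + r * p) / (r * p) ^ 6
                 * ((p ^ S (S l) - (r * p) ^ S (S l) * 1) * (p ^ S l - (r * p) ^ S l * 1)
                    / (p ^ S l * pq_num 1 r (S (S l)) * (p ^ l * pq_num 1 r (S l))))).
    { apply Rmult_le_pos; apply Rdiv_nonneg; try nra.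
      apply Rmult_lt_0_compat; apply Rmult_lt_0_compat; lra. }
    lra.
Qed.

Theorem theorem1 (p q : R) (n : nat) :
  0 < q -> q < p -> p <= 1 -> (1 <= n)%nat ->
  forall x : R, 0 <= x <= 1 ->
    MKZD p q n (e_ 0) x = 1 /\
    (x / q ^ 2 * (1 - (q + 1) / pq_num p q n) <= MKZD p q n (e_ 1) x /\
     MKZD p q n (e_ 1) x <= x / q + (p ^ n - q ^ n * x) / (q ^ 2 * pq_num p q n)) /\
    ((2 <= n)%nat ->
     MKZD p q n (e_ 2) x <=
       x ^ 2 / q ^ 2
       + (p + q) ^ 2 / q ^ 5 * ((p ^ n - q ^ n * x) / pq_num p q n) * x
       + p * (p + q) / q ^ 6 *
         ((p ^ n - q ^ n * x) * (p ^ (n - 1) - q ^ (n - 1) * x)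
          / (pq_num p q n * pq_num p q (n - 1)))).
Proof.
  intros Hq Hqp Hp Hn x Hx.
  split; [apply MKZD_e0; assumption|].
  split; [split; [apply MKZD_e1_lower | apply MKZD_e1_upper]; assumption|].
  intro Hn2; apply MKZD_e2_upper; assumption.
Qed.
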